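(* Let $H$ be an Abelian group, $X$ a simplicial set and $\gamma:X_2\to H$ a normalized 2-cocycle. Then the maps $\eta_n:X_n\to N(H)_{n-1}=H^{n-1}$ defined inductively by $\eta_1(x)=0$, $\eta_2(x)=\gamma(x)$ and \[ \eta_n(x)=\big(\gamma(d_3\cdots d_n(x)),\ \eta_{n-1}(d_1x)-\eta_{n-1}(d_0x)\big)\in H\times H^{n-2}\qquad(n\ge3) \] define an $N(H)$-valued twisting function on $X$.
   Context: $N(H)$ is the nerve of $H$: $N(H)_n=H^n$, $d_0$ drops the first entry, $d_n$ drops the last, $d_i$ ($0<i<n$) replaces $a_i,a_{i+1}$ by $a_i+a_{i+1}$, $s_j$ inserts $0$ after the $j$-th entry. A normalized 2-cocycle is $\gamma:X_2\to H$ vanishing on degenerate simplices with $\gamma(d_0\sigma)-\gamma(d_1\sigma)+\gamma(d_2\sigma)-\gamma(d_3\sigma)=0$ for all $\sigma\in X_3$. An $N(H)$-valued twisting function is a family $\eta_n:X_n\to N(H)_{n-1}$, $n\ge1$, satisfying $d_0\eta(x)=\eta(d_1x)-\eta(d_0x)$, $d_i\eta(x)=\eta(d_{i+1}x)$ for $i>0$, $\eta(s_0x)=0$, $\eta(s_jx)=s_{j-1}\eta(x)$ for $j>0$; equivalently, it makes $\{N(H)_n\times X_n\}$ a simplicial set with $d_0(g,x)=(d_0g+\eta(x),d_0x)$ and the other structure maps componentwise. *)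

From mathcomp Require Import all_boot all_algebra.
Set Implicit Arguments. Unset Strict Implicit. Unset Printing Implicit Defensive.
Import GRing.Theory.
Local Open Scope ring_scope.

(* Simplicial sets: X_n = ss n, faces fc i : X_{n+1} -> X_n (0 <= i <= n+1),
   degeneracies dg j : X_n -> X_{n+1} (0 <= j <= n).  Indices are nats; the
   maps on out-of-range indices are unconstrained junk and never used. *)
Record sSet := SSet {
  ss : nat -> Type;
  fc : forall n, nat -> ss n.+1 -> ss n;
  dg : forall n, nat -> ss n -> ss n.+1;
  fc_fc : forall n i j (x : ss n.+2), (i < j)%N -> (j <= n.+2)%N ->
     fc i (fc j x) = fc j.-1 (fc i x);
  fc_dg_lt : forall n i j (x : ss n.+1), (i < j)%N -> (j <= n.+1)%N ->
     fc i (dg j x) = dg j.-1 (fc i x);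
  fc_dg_eq : forall n j (x : ss n), (j <= n)%N ->
     fc j (dg j x) = x /\ fc j.+1 (dg j x) = x;
  fc_dg_gt : forall n i j (x : ss n.+1), (j.+1 < i)%N -> (i <= n.+2)%N ->
     fc i (dg j x) = dg j (fc i.-1 x);
  dg_dg : forall n i j (x : ss n), (i <= j)%N -> (j <= n)%N ->
     dg i (dg j x) = dg j.+1 (dg i x)
}.
Arguments fc {s n}.
Arguments dg {s n}.

Section Nerve.
Variable H : zmodType.

(* The nerve N(H): N(H)_n = H^n, represented as sequences of length n. *)
(* face d_i on H^n: d_0 drops the first entry, d_n drops the last one,
   d_i (0<i<n) replaces a_i, a_{i+1} (1-based) by a_i + a_{i+1}. *)
Definition nface (i : nat) (s : seq H) : seq H :=
  if i == 0%N then behead s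
  else if (size s <= i)%N then take (size s).-1 s
  else take i.-1 s ++ (nth 0 s i.-1 + nth 0 s i) :: drop i.+1 s.

Definition ndeg (j : nat) (s : seq H) : seq H := take j s ++ 0 :: drop j s.

Definition seq_sub (s t : seq H) : seq H := [seq p.1 - p.2 | p <- zip s t].

Variable X : sSet.

Definition normalized_2cocycle (gamma : ss X 2 -> H) : Prop :=
  (forall y : ss X 1, gamma (dg 0 y) = 0 /\ gamma (dg 1 y) = 0) /\
  (forall sigma : ss X 3,
     gamma (fc 0 sigma) - gamma (fc 1 sigma) + gamma (fc 2 sigma)
       - gamma (fc 3 sigma) = 0).

(* An N(H)-valued twisting function; eta m : X_{m+1} -> N(H)_m = H^m,
   i.e. eta m is the paper's eta_{m+1}. *)
Definition twisting_function (eta : forall m, ss X m.+1 -> seq H) : Prop :=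
  [/\ forall m (x : ss X m.+1), size (eta m x) = m,
      forall m (x : ss X m.+2),
        nface 0 (eta m.+1 x) = seq_sub (eta m (fc 1 x)) (eta m (fc 0 x)),
      forall m i (x : ss X m.+2), (0 < i)%N -> (i <= m.+1)%N ->
        nface i (eta m.+1 x) = eta m (fc i.+1 x),
      forall m (x : ss X m), eta m (dg 0 x) = nseq m 0
    & forall m j (x : ss X m.+1), (0 < j)%N -> (j <= m.+1)%N ->
        eta m.+1 (dg j x) = ndeg j.-1 (eta m x)].

Local Unset Implicit Arguments.
(* to2 k x = d_3 ... d_{k+2} x for x in X_{k+2} (identity for k = 0) *)
Fixpoint to2 (k : nat) : ss X k.+2 -> ss X 2 :=
  match k return ss X k.+2 -> ss X 2 with
  | 0 => fun x => x
  | S k' => fun x => to2 k' (@fc X k'.+2 k'.+3 x)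
  end.

(* eta_aux gamma k = the paper's eta_{k+2} *)
Fixpoint eta_aux (gamma : ss X 2 -> H) (k : nat) : ss X k.+2 -> seq H :=
  match k return ss X k.+2 -> seq H with
  | 0 => fun x => [:: gamma x]
  | S k' => fun x => gamma (to2 k'.+1 x) ::
       seq_sub (eta_aux gamma k' (fc 1 x)) (eta_aux gamma k' (fc 0 x))
  end.

(* eta_from gamma m = the paper's eta_{m+1}: eta_1 = 0, eta_2 = gamma,
   eta_n x = (gamma (d_3 ... d_n x), eta_{n-1}(d_1 x) - eta_{n-1}(d_0 x)). *)
Definition eta_from (gamma : ss X 2 -> H) (m : nat) : ss X m.+1 -> seq H :=
  match m return ss X m.+1 -> seq H with
  | 0 => fun _ => [::]
  | S k => eta_aux gamma k
  end.

End Nerve.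
Arguments to2 {X}.
Arguments eta_aux {H X}.
Arguments eta_from {H X}.

From Pilot Require Import Defs.
From mathcomp Require Import all_boot all_algebra.
From mathcomp Require Import zify.
Set Implicit Arguments. Unset Strict Implicit. Unset Printing Implicit Defensive.
Import GRing.Theory.
Local Open Scope ring_scope.

(* The tail of eta_n is a difference of values of
   eta_{n-1}, so faces d_i (i >= 2) and degeneracies s_j (j >= 1) pass through
   it by the simplicial identities; on the head coordinate
   gamma (d_3 ... d_n x) they act trivially or give back the head coordinate of
   eta_{n-1}.  The face d_1, which adds the first two coordinates, is the only
   place where the cocycle condition enters: applied to the 3-simplex
   d_4 ... d_n x it says that the head coordinates add up correctly.  The
   conditions for d_0 and s_0 are the recursive definition and normalization. *)

(* fintype's [seq_sub] would otherwise shadow the componentwise difference. *)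
Local Notation seq_sub := Defs.seq_sub.

Section ComponentwiseDifference.
Variable H : zmodType.
Implicit Types s t : seq H.

Lemma size_seq_sub s t : size (seq_sub s t) = minn (size s) (size t).
Proof. by rewrite /seq_sub size_map size_zip. Qed.

Lemma seq_sub_cons (a b : H) s t : seq_sub (a :: s) (b :: t) = a - b :: seq_sub s t.
Proof. by []. Qed.

Lemma seq_subrr s : seq_sub s s = nseq (size s) 0.
Proof. by elim: s => // a s IH; rewrite seq_sub_cons IH subrr. Qed.

Lemma seq_subr0 s n : size s = n -> seq_sub s (nseq n 0) = s.
Proof. by move<-; elim: s => // a s IH; rewrite /= seq_sub_cons IH subr0. Qed.

Lemma seq_subBB s t u : size s = size t -> size u = size t ->
  seq_sub (seq_sub s t) (seq_sub u t) = seq_sub s u.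
Proof.
elim: s t u => [|a s IH] [|b t] [|c u] //= [st] [ut].
by rewrite !seq_sub_cons IH // opprB addrA subrK.
Qed.

Lemma nface1_cons2 (a b : H) s : nface 1 [:: a, b & s] = a + b :: s.
Proof. by rewrite /nface /= drop0. Qed.

Lemma nfaceSS_cons i (a : H) s : (i < size s)%N ->
  nface i.+2 (a :: s) = a :: nface i.+1 s.
Proof.
rewrite /nface /= => lt_i_s.
case: ifP => [le_s_i | /negbT gt_s_i].
  have -> : size s = i.+1 by lia.
  by rewrite leqnn.
by have -> : (size s <= i.+1)%N = false by lia.
Qed.

Lemma nface_seq_sub i s t : size s = size t -> (i < size s)%N ->
  nface i.+1 (seq_sub s t) = seq_sub (nface i.+1 s) (nface i.+1 t).
Proof.
elim: s t i => [|a s IH] [|b t] i //= [st] lt_i_s.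
rewrite seq_sub_cons; case: i lt_i_s => [|i] lt_i_s.
  case: s t st {IH lt_i_s} => [|a' s] [|b' t] // st.
  by rewrite seq_sub_cons !nface1_cons2 seq_sub_cons addrACA opprD.
rewrite !nfaceSS_cons ?size_seq_sub -?st ?minnn; try lia.
by rewrite seq_sub_cons IH //; lia.
Qed.

Lemma ndeg0 s : ndeg 0 s = 0 :: s.
Proof. by rewrite /ndeg take0 drop0. Qed.

Lemma ndegS_cons j (a : H) s : ndeg j.+1 (a :: s) = a :: ndeg j s.
Proof. by []. Qed.

Lemma ndeg_seq_sub j s t : size s = size t ->
  ndeg j (seq_sub s t) = seq_sub (ndeg j s) (ndeg j t).
Proof.
elim: s t j => [|a s IH] [|b t] [|j] // st.
- by rewrite /ndeg /seq_sub /= subr0.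
- by rewrite /ndeg /seq_sub /= subr0.
- by rewrite !ndeg0 !seq_sub_cons subr0.
- by rewrite seq_sub_cons !ndegS_cons seq_sub_cons IH //; case: st.
Qed.

End ComponentwiseDifference.

Section IteratedLastFaces.
Variable X : sSet.

Local Unset Implicit Arguments.
(* to3 k x = d_4 ... d_{k+3} x for x in X_{k+3}, the analogue of [to2]. *)
Fixpoint to3 (k : nat) : ss X k.+3 -> ss X 3 :=
  match k return ss X k.+3 -> ss X 3 with
  | 0 => fun x => x
  | S k' => fun x => to3 k' (@fc X k'.+3 k'.+4 x)
  end.
Local Set Implicit Arguments.

Lemma to2S k (x : ss X k.+3) : to2 k.+1 x = fc 3 (to3 k x).
Proof. by elim: k x => [|k IH] x //; apply: IH. Qed.

Lemma to2_fc_low k j (x : ss X k.+3) : (j <= 2)%N ->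
  to2 k (fc j x) = fc j (to3 k x).
Proof.
move=> le_j2; elim: k x => [|k IH] x //.
change (to2 k (fc k.+3 (fc j x)) = fc j (to3 k (fc k.+4 x))).
by rewrite -IH; congr (to2 k _); rewrite [RHS]fc_fc //; lia.
Qed.

Lemma to2_fc_high k j (x : ss X k.+3) : (3 <= j <= k.+3)%N ->
  to2 k (fc j x) = to2 k.+1 x.
Proof.
elim: k x j => [|k IH] x j /andP[ge_j3 le_j]; first by have -> : j = 3 by lia.
have [-> //|ne_j] := eqVneq j k.+4.
change (to2 k (fc k.+3 (fc j x)) = to2 k.+1 (fc k.+4 x)).
have <- : fc j (fc k.+4 x) = fc k.+3 (fc j x) by rewrite fc_fc //; lia.
by apply: IH; lia.
Qed.

Lemma to2_dg_high k j (x : ss X k.+2) : (2 <= j <= k.+2)%N ->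
  to2 k.+1 (dg j x) = to2 k x.
Proof.
elim: k x j => [|k IH] x j /andP[ge_j2 le_j].
  have -> : j = 2 by lia.
  by case: (fc_dg_eq x (leqnn 2)).
change (to2 k.+1 (fc k.+4 (dg j x)) = to2 k.+1 x).
have [->|ne_j] := eqVneq j k.+3; first by case: (fc_dg_eq x (leqnn k.+3)) => _ ->.
by rewrite fc_dg_gt /=; [apply: IH|..]; lia.
Qed.

Lemma to2_dg_low k j (x : ss X k.+1) : (j <= 1)%N ->
  exists y, to2 k (dg j x) = dg j y.
Proof.
move=> le_j1; elim: k x => [|k IH] x; first by exists x.
change (exists y, to2 k (fc k.+3 (dg j x)) = dg j y).
by rewrite fc_dg_gt /=; [apply: IH|..]; lia.
Qed.

End IteratedLastFaces.

Section TwistingFunction.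
Variables (H : zmodType) (X : sSet) (gamma : ss X 2 -> H).
Hypothesis gamma_cocycle : normalized_2cocycle gamma.

Lemma eta_fromS k (x : ss X k.+2) : eta_from gamma k.+1 x =
  gamma (to2 k x) :: seq_sub (eta_from gamma k (fc 1 x)) (eta_from gamma k (fc 0 x)).
Proof. by case: k x. Qed.

Lemma size_eta_from m (x : ss X m.+1) : size (eta_from gamma m x) = m.
Proof. by elim: m x => [|k IH] x //; rewrite eta_fromS /= size_seq_sub !IH minnn. Qed.

Lemma gamma_to2_dg_low k j (x : ss X k.+1) : (j <= 1)%N ->
  gamma (to2 k (dg j x)) = 0.
Proof.
move=> le_j1; have [y ->] := to2_dg_low x le_j1.
have [/(_ y) [gamma_dg0 gamma_dg1] _] := gamma_cocycle.
by case: j le_j1 => [|[|]].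
Qed.

Lemma gamma_cocycle_fc3 (sigma : ss X 3) :
  gamma (fc 3 sigma) + (gamma (fc 1 sigma) - gamma (fc 0 sigma)) = gamma (fc 2 sigma).
Proof.
have [_ /(_ sigma) cocycle] := gamma_cocycle.
apply/eqP; rewrite -subr_eq0 -oppr_eq0 -cocycle; apply/eqP.
by rewrite opprB opprD opprB addrCA addrC [gamma (fc 2 sigma) + _]addrC.
Qed.

Lemma eta_from_dg0 m (x : ss X m) : eta_from gamma m (dg 0 x) = nseq m 0.
Proof.
case: m x => [|k] x //.
rewrite eta_fromS gamma_to2_dg_low //.
by case: (fc_dg_eq x (leq0n k.+1)) => -> ->; rewrite seq_subrr size_eta_from.
Qed.

Lemma eta_from_dg1 m (x : ss X m.+1) :
  eta_from gamma m.+1 (dg 1 x) = ndeg 0 (eta_from gamma m x).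
Proof.
rewrite eta_fromS gamma_to2_dg_low // ndeg0.
case: (fc_dg_eq x (isT : (1 <= m.+1)%N)) => -> _.
by rewrite fc_dg_lt //= eta_from_dg0 seq_subr0 // size_eta_from.
Qed.

Lemma eta_from_dg m j (x : ss X m.+1) : (0 < j <= m.+1)%N ->
  eta_from gamma m.+1 (dg j x) = ndeg j.-1 (eta_from gamma m x).
Proof.
elim: m j x => [|k IH] [|[|j]] x // le_j; try exact: eta_from_dg1.
rewrite [LHS]eta_fromS [eta_from _ k.+1 x]eta_fromS to2_dg_high ?ndegS_cons; last lia.
congr (_ :: _); rewrite fc_dg_lt ?[fc 0 _]fc_dg_lt; try lia.
by rewrite !IH ?ndeg_seq_sub ?size_eta_from //; lia.
Qed.

Lemma eta_from_fc1 m (x : ss X m.+3) :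
  nface 1 (eta_from gamma m.+2 x) = eta_from gamma m.+1 (fc 2 x).
Proof.
rewrite !eta_fromS seq_sub_cons nface1_cons2 to2S !to2_fc_low //.
rewrite gamma_cocycle_fc3; congr (_ :: _).
rewrite [fc 0 (fc 1 x)]fc_fc // [fc 1 (fc 2 x)]fc_fc // [fc 0 (fc 2 x)]fc_fc //.
by rewrite seq_subBB // !size_eta_from.
Qed.

Lemma eta_from_fc m i (x : ss X m.+2) : (0 < i <= m.+1)%N ->
  nface i (eta_from gamma m.+1 x) = eta_from gamma m (fc i.+1 x).
Proof.
elim: m i x => [|k IH] [|[|i]] x // le_i; first exact: eta_from_fc1.
rewrite [eta_from _ k.+2 _]eta_fromS [RHS]eta_fromS to2_fc_high; last lia.
rewrite nfaceSS_cons; last by rewrite size_seq_sub !size_eta_from minnn.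
congr (_ :: _); rewrite nface_seq_sub ?size_eta_from // !IH; try lia.
by rewrite [fc 1 (fc i.+3 x)]fc_fc ?[fc 0 (fc i.+3 x)]fc_fc //; lia.
Qed.

End TwistingFunction.

Theorem mainTheorem10 (H : zmodType) (X : sSet) (gamma : ss X 2 -> H) :
  normalized_2cocycle gamma -> twisting_function (eta_from gamma).
Proof.
move=> gamma_cocycle; split.
- exact: size_eta_from.
- by move=> m x; rewrite eta_fromS.
- by move=> m i x ? ?; apply: eta_from_fc => //; apply/andP.
- exact: eta_from_dg0.
- by move=> m j x ? ?; apply: eta_from_dg => //; apply/andP.
Qed.
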